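(* Let $p$ be a prime and $n\ge 1$. The maximum, over all two-element subsets $\{P,Q\}\subseteq \mathbb Z_p^n$, of the number of distinct reduced Gröbner bases of the ideal $I(\{P,Q\})\subseteq \mathbb Z_p[x_1,\ldots,x_n]$ is $n$.
   Context: $\mathbb Z_p$ denotes the field of integers modulo $p$. For a finite set $S\subseteq \mathbb Z_p^n$, $I(S)$ is the ideal of all polynomials in $\mathbb Z_p[x_1,\ldots,x_n]$ vanishing at every point of $S$. The number of reduced Gröbner bases of an ideal means the number of distinct reduced Gröbner bases obtained as the monomial order ranges over all monomial orders. *)

From HB Require Import structures.
From mathcomp Require Import all_boot all_order all_algebra.
From Stdlib Require List.
Set Implicit Arguments. Unset Strict Implicit. Unset Printing Implicit Defensive.
Import GRing.Theory.
Local Open Scope ring_scope.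

(* Monomials x_1^{a_1} ... x_n^{a_n} are exponent vectors. *)
Definition mon (n : nat) := {ffun 'I_n -> nat}.
Definition mon1 (n : nat) : mon n := [ffun => 0%N].
Definition mmul (n : nat) (a b : mon n) : mon n := [ffun i => (a i + b i)%N].
Definition mdiv (n : nat) (a b : mon n) : bool := [forall i, (a i <= b i)%N].

(* A polynomial in F[x_1..x_n] is a finitely supported coefficient function. *)
Definition finsupp (F : fieldType) (n : nat) (f : mon n -> F) : Prop :=
  exists s : seq (mon n), forall m, f m != 0 -> m \in s.

Definition mon_eval (F : fieldType) (n : nat) (m : mon n) (x : 'rV[F]_n) : F :=
  \prod_(i < n) x ord0 i ^+ m i.

(* f vanishes at x (the sum is taken over any duplicate-free list covering
   the support of f; the value does not depend on that choice). *)
Definition vanishes_at (F : fieldType) (n : nat) (f : mon n -> F) (x : 'rV[F]_n) : Prop :=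
  exists s : seq (mon n), uniq s /\ (forall m, f m != 0 -> m \in s) /\
    \sum_(m <- s) f m * mon_eval m x = 0.

Definition vanishing_ideal (F : fieldType) (n : nat) (S : 'rV[F]_n -> Prop)
  (f : mon n -> F) : Prop :=
  finsupp f /\ forall x, S x -> vanishes_at f x.

Definition monomial_order (n : nat) (le : rel (mon n)) : Prop :=
  [/\ reflexive le /\ antisymmetric le /\ transitive le,
      (forall a b, le a b || le b a),
      (forall a b c, le a b -> le (mmul a c) (mmul b c)) &
      (forall A : mon n -> Prop, (exists m, A m) ->
         exists m, A m /\ forall m', A m' -> le m m')].

Definition lead_mon (F : fieldType) (n : nat) (le : rel (mon n))
  (f : mon n -> F) (m : mon n) : Prop :=
  f m != 0 /\ forall m', f m' != 0 -> le m' m.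

Definition reduced_groebner (F : fieldType) (n : nat) (le : rel (mon n))
  (I : (mon n -> F) -> Prop) (G : (mon n -> F) -> Prop) : Prop :=
  [/\
      (exists l : list (mon n -> F), forall g, G g <-> List.In g l),
      (forall g, G g -> I g /\ exists m, lead_mon le g m /\ g m = 1),
      (* Groebner basis: <LT(G)> = <LT(I)> *)
      (forall f, I f -> (exists m, f m != 0) ->
         exists g mg mf, [/\ G g, lead_mon le g mg, lead_mon le f mf & mdiv mg mf]) &
      (forall g g', G g -> G g' -> g <> g' ->
         forall mg', lead_mon le g' mg' -> forall m, g m != 0 -> ~~ mdiv mg' m)].

Definition is_some_rgb (F : fieldType) (n : nat)
  (I : (mon n -> F) -> Prop) (G : (mon n -> F) -> Prop) : Prop :=
  exists le : rel (mon n), monomial_order le /\ reduced_groebner le I G.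

Definition same_set (F : fieldType) (n : nat) (G1 G2 : (mon n -> F) -> Prop) : Prop :=
  forall g, G1 g <-> G2 g.

Definition num_reduced_groebner (F : fieldType) (n : nat)
  (I : (mon n -> F) -> Prop) (k : nat) : Prop :=
  exists L : list ((mon n -> F) -> Prop),
    [/\ length L = k,
        (forall G, List.In G L -> is_some_rgb I G),
        (forall G, is_some_rgb I G -> exists G', List.In G' L /\ same_set G G') &
        (forall i j, (i < length L)%coq_nat -> (j < length L)%coq_nat -> i <> j ->
           forall d, ~ same_set (List.nth i L d) (List.nth j L d))].

Definition pair_set (F : fieldType) (n : nat) (P Q : 'rV[F]_n) (x : 'rV[F]_n) : Prop :=
  x = P \/ x = Q.

From mathcomp Require Import all_boot all_order all_algebra.
From mathcomp Require Import zify ring.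
From Stdlib Require Import Classical FunctionalExtensionality.
From Stdlib Require List Wf_nat.
Set Implicit Arguments. Unset Strict Implicit. Unset Printing Implicit Defensive.
Import GRing.Theory.

(* Let P <> Q be points of F^n (F any field) and let D be the set of
   coordinates j with P_j <> Q_j.  For i in D consider
     G_i = { (x_i - P_i)(x_i - Q_i) } U { x_k + alpha_k x_i + beta_k | k <> i },
   where x_k = -alpha_k x_i - beta_k is the line through P and Q.  We show:
   1. G_i is the reduced Groebner basis of I({P,Q}) for the weighted order
      in which x_i has weight 1 and the other variables weight 2, ties being
      broken lexicographically (gb_cand_rgb_wlex);
   2. for any monomial order, if x_i is the least variable x_j with j in D,
      every reduced Groebner basis of I({P,Q}) equals G_i (rgb_classify);
   3. G_a <> G_b for a <> b (gb_cand_distinct).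
   Hence I({P,Q}) has exactly |D| <= n reduced Groebner bases (num_rgb_pair),
   and |D| = n for P = (0,...,0), Q = (1,...,1). *)

Fixpoint lex_le (s t : seq nat) : bool :=
  match s, t with
  | x :: s', y :: t' => (x < y) || ((x == y) && lex_le s' t')
  | _, _ => true
  end.

Lemma lex_le_refl s : lex_le s s.
Proof. by elim: s => //= x s ->; rewrite eqxx orbT. Qed.

Lemma lex_le_total s t : lex_le s t || lex_le t s.
Proof.
elim: s t => [|x s IH] [|y t] //=.
by case: (ltngtP x y) => //= ->; rewrite ?eqxx ?orbT.
Qed.

Lemma nat_least (B : nat -> Prop) :
  (exists k, B k) -> exists k, B k /\ forall k', B k' -> k <= k'.
Proof.
move=> exB; have dec k : B k \/ ~ B k by apply: classic.
have [k [[Bk k_min] _]] := Wf_nat.dec_inh_nat_subset_has_unique_least_element B dec exB.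
by exists k; split=> // k' /k_min /leP.
Qed.

Section LexOnKeys.
Variable X : Type.
Implicit Types (e : seq X) (f g h : X -> nat).

Lemma lex_le_trans e f g h :
  lex_le (map f e) (map g e) -> lex_le (map g e) (map h e) ->
  lex_le (map f e) (map h e).
Proof.
elim: e => //= x e IH.
case/orP=> [lt1|/andP[/eqP e1 l1]]; case/orP=> [lt2|/andP[/eqP e2 l2]].
- by rewrite (ltn_trans lt1 lt2).
- by rewrite -e2 lt1.
- by rewrite e1 lt2.
- by rewrite e1 e2 eqxx (IH l1 l2) orbT.
Qed.

Lemma lex_le_anti e f g :
  lex_le (map f e) (map g e) -> lex_le (map g e) (map f e) -> map f e = map g e.
Proof.
elim: e => //= x e IH.
case/orP=> [lt1|/andP[/eqP e1 l1]]; case/orP=> [lt2|/andP[/eqP e2 l2]].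
- by have := ltn_trans lt1 lt2; rewrite ltnn.
- by rewrite e2 ltnn in lt1.
- by rewrite e1 ltnn in lt2.
- by rewrite e1 (IH l1 l2).
Qed.

Lemma lex_le_addr e f g h :
  lex_le (map f e) (map g e) ->
  lex_le (map (fun x => f x + h x) e) (map (fun x => g x + h x) e).
Proof.
elim: e => //= x e IH.
case/orP=> [lt1|/andP[/eqP e1 l1]]; first by rewrite ltn_add2r lt1.
by rewrite e1 eqxx (IH l1) orbT.
Qed.

Lemma lex_le_least e (T : Type) (key : T -> X -> nat) (A : T -> Prop) :
  (exists t, A t) ->
  exists t, A t /\ forall t', A t' -> lex_le (map (key t) e) (map (key t') e).
Proof.
elim: e A => [|x e IH] A [t0 At0] /=; first by exists t0.
have [v [[t1 [At1 <-]] v_min]] :=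
  nat_least (ex_intro (fun v => exists t, A t /\ key t x = v) _
                      (ex_intro _ t0 (conj At0 erefl))).
have [t [[At kt] t_min]] :=
  IH (fun t => A t /\ key t x = key t1 x) (ex_intro _ t1 (conj At1 erefl)).
exists t; split=> // t' At'.
have := v_min (key t' x) (ex_intro _ t' (conj At' erefl)).
rewrite kt leq_eqVlt => /orP[/eqP e1|->] //.
by rewrite e1 eqxx (t_min t') ?orbT.
Qed.
End LexOnKeys.

Lemma seq_max (T : eqType) (r : rel T) :
  (forall a b, r a b || r b a) -> transitive r ->
  forall x s, exists2 m, m \in x :: s & forall y, y \in x :: s -> r y m.
Proof.
move=> tot tr x s; have refl a : r a a by have := tot a a; rewrite orbb.
elim: s x => [|z s IH] x.
  by exists x => [|y]; rewrite ?inE // => /eqP ->.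
have [m ms m_max] := IH z.
case/orP: (tot x m) => h.
  exists m => [|y]; first by rewrite inE ms orbT.
  by rewrite inE => /orP[/eqP -> //|]; apply: m_max.
exists x => [|y]; first by rewrite inE eqxx.
by rewrite inE => /orP[/eqP -> //|/m_max ym]; apply: tr ym h.
Qed.

Section Monomials.
Variable n : nat.
Implicit Types (a b c m : mon n) (i j k : 'I_n).

Lemma mmul1m m : mmul (mon1 n) m = m.
Proof. by apply/ffunP => j; rewrite !ffunE. Qed.

Definition xpow i (d : nat) : mon n := [ffun j => if j == i then d else 0%N].

Lemma xpowE i d j : xpow i d j = if j == i then d else 0%N.
Proof. by rewrite ffunE. Qed.

Lemma xpow0 i : xpow i 0 = mon1 n.
Proof. by apply/ffunP => j; rewrite !ffunE; case: ifP. Qed.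

Lemma xpow_eq i j d d' : 0 < d -> (xpow i d == xpow j d') = (i == j) && (d == d').
Proof.
move=> d_gt0; apply/eqP/andP => [/ffunP /(_ i)|[/eqP -> /eqP -> //]].
rewrite !xpowE eqxx; case: eqP => [_ ->|_ d0]; first by rewrite eqxx.
by rewrite d0 in d_gt0.
Qed.

Lemma xpow_neq1 i d : 0 < d -> xpow i d != mon1 n.
Proof. by move=> d_gt0; rewrite -(xpow0 i) xpow_eq // eqn0Ngt d_gt0 andbF. Qed.

Lemma xpow_dvd i d m : mdiv (xpow i d) m = (d <= m i).
Proof.
apply/forallP/idP => [/(_ i)|d_le j]; first by rewrite xpowE eqxx.
by rewrite xpowE; case: eqP => [->|].
Qed.

Lemma mon_on_var i m : (forall k, k != i -> m k = 0%N) -> m = xpow i (m i).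
Proof. by move=> z; apply/ffunP => j; rewrite xpowE; case: eqP => [->|/eqP /z]. Qed.

Lemma dvd_xpow m k d : mdiv m (xpow k d) -> m = xpow k (m k) /\ m k <= d.
Proof.
move/forallP=> dv; split; last by have := dv k; rewrite xpowE eqxx.
by apply: mon_on_var => j jk; have := dv j; rewrite xpowE (negbTE jk); lia.
Qed.
End Monomials.

Section MonomialOrders.
Variables (n : nat) (le : rel (mon n)).
Hypothesis mo : monomial_order le.
Implicit Types a b c m : mon n.

Lemma mo_refl m : le m m.
Proof. by case: mo => [[refl _]] _ _ _; apply: refl. Qed.

Lemma mo_anti a b : le a b -> le b a -> a = b.
Proof. by case: mo => [[_ [anti _]]] _ _ _ ab ba; apply: anti; rewrite ab ba. Qed.

Lemma mo_trans b a c : le a b -> le b c -> le a c.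
Proof. by case: mo => [[_ [_ tr]]] _ _ _; apply: tr. Qed.

Lemma mo_total a b : le a b || le b a.
Proof. by case: mo => _ tot _ _; apply: tot. Qed.

Lemma mo_mulr a b c : le a b -> le (mmul a c) (mmul b c).
Proof. by case: mo => _ _ mul _; apply: mul. Qed.

(* 1 is the least monomial: if m < 1 then 1 > m > m^2 > ... would be a
   chain without least element. *)
Lemma mo_ge1 m : le (mon1 n) m.
Proof.
apply: NNPP => not_1m.
have m_le1 : le m (mon1 n) by case/orP: (mo_total (mon1 n) m) => // /not_1m.
pose pw k : mon n := [ffun j => m j * k]%N.
have [_ _ _ wf] := mo.
have [a [[k ->] a_min]] :=
  wf (fun a => exists k, a = pw k) (ex_intro _ (pw 0%N) (ex_intro _ 0%N erefl)).
have pwS : mmul m (pw k) = pw k.+1 by apply/ffunP => j; rewrite !ffunE mulnS.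
have le_Sk : le (pw k.+1) (pw k) by rewrite -pwS -{2}[pw k]mmul1m; apply: mo_mulr.
have /ffunP eq_Sk := mo_anti le_Sk (a_min _ (ex_intro _ k.+1 erefl)).
suff m1 : m = mon1 n by apply: not_1m; rewrite m1 mo_refl.
apply/ffunP => j; have := eq_Sk j; rewrite !ffunE mulnS => /eqP.
by rewrite -{2}[(m j * k)%N]add0n eqn_add2r => /eqP.
Qed.

(* A divisor is smaller: b = a * c with c >= 1. *)
Lemma mo_dvd a b : mdiv a b -> le a b.
Proof.
move/forallP=> dv; have := mo_mulr a (mo_ge1 [ffun j => b j - a j]%N).
rewrite mmul1m; congr (le _ _).
by apply/ffunP => j; rewrite !ffunE subnK.
Qed.

Lemma lead_mon_unique (F : fieldType) (f : mon n -> F) m m' :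
  lead_mon le f m -> lead_mon le f m' -> m = m'.
Proof. by move=> [fm m_max] [fm' m'_max]; apply: mo_anti; [apply: m'_max|apply: m_max]. Qed.

Lemma lead_mon_exists (F : fieldType) (f : mon n -> F) :
  finsupp f -> (exists m, f m != 0%R) -> exists m, lead_mon le f m.
Proof.
move=> [s s_supp] [m0 fm0].
have : m0 \in [seq m <- s | f m != 0%R] by rewrite mem_filter fm0 s_supp.
case Es: [seq m <- s | f m != 0%R] => [//|x t] _.
have [m] := seq_max mo_total (fun b a c => @mo_trans b a c) x t.
rewrite -Es mem_filter => /andP[fm _] m_max.
by exists m; split=> // m' fm'; apply: m_max; rewrite mem_filter fm' s_supp.
Qed.
End MonomialOrders.

(* The weighted order used to realise G_i: x_i has weight 1, every other
   variable weight 2; ties are broken lexicographically on the exponents. *)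
Section WeightedLex.
Variables (n : nat) (i : 'I_n).
Implicit Types (a b c m : mon n) (j k : 'I_n).

Definition weight j : nat := if j == i then 1 else 2.
Definition wdeg m : nat := \sum_(j < n) m j * weight j.

Definition wkey m (o : option 'I_n) : nat := if o is Some j then m j else wdeg m.
Definition wkeys : seq (option 'I_n) := None :: map Some (enum 'I_n).
Definition wlex : rel (mon n) :=
  fun a b => lex_le (map (wkey a) wkeys) (map (wkey b) wkeys).

Lemma wdeg_mul a c : wdeg (mmul a c) = wdeg a + wdeg c.
Proof. by rewrite /wdeg -big_split; apply: eq_bigr => j _; rewrite ffunE mulnDl. Qed.

Lemma wdeg_xpow k d : wdeg (xpow k d) = d * weight k.
Proof.
rewrite /wdeg (bigD1 k) //= big1 ?addn0 ?xpowE ?eqxx // => j /negbTE jk.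
by rewrite xpowE jk.
Qed.

Lemma wdeg_ge m j : m j * weight j <= wdeg m.
Proof. by rewrite /wdeg (bigD1 j) //= leq_addr. Qed.

Lemma wlex_mo : monomial_order wlex.
Proof.
have wkey_mul a c o : wkey (mmul a c) o = wkey a o + wkey c o.
  by case: o => [j|] /=; rewrite ?ffunE ?wdeg_mul.
split.
- split; first by move=> a; apply: lex_le_refl.
  split; last by move=> b a c; apply: lex_le_trans.
  move=> a b /andP[ab ba]; apply/ffunP => j.
  have /eq_in_map keys_eq := lex_le_anti ab ba.
  by apply: (keys_eq (Some j)); rewrite inE /= map_f ?mem_enum.
- by move=> a b; apply: lex_le_total.
- move=> a b c; rewrite /wlex (eq_map (wkey_mul a c)) (eq_map (wkey_mul b c)).
  exact: lex_le_addr.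
- by move=> A exA; apply: lex_le_least.
Qed.

Lemma wlex_wdeg a b : wlex a b -> wdeg a <= wdeg b.
Proof. by rewrite /wlex /=; case/orP => [/ltnW //|/andP[/eqP -> _]]. Qed.

Lemma wdeg_wlex a b : wdeg a < wdeg b -> wlex a b.
Proof. by rewrite /wlex /= => ->. Qed.

Lemma wdeg_le1 m : wdeg m <= 1 -> m \in [:: xpow i 1; mon1 n].
Proof.
move=> deg_le1.
have m_on_i : m = xpow i (m i).
  apply: mon_on_var => k ki.
  by have := leq_trans (wdeg_ge m k) deg_le1; rewrite /weight (negbTE ki); lia.
have mi_le1 : m i <= 1.
  by have := leq_trans (wdeg_ge m i) deg_le1; rewrite /weight eqxx muln1.
by rewrite m_on_i !inE; case: (m i) mi_le1 => [|[|]] // _; rewrite ?xpow0 eqxx ?orbT.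
Qed.
End WeightedLex.

Section Evaluation.
Variables (F : fieldType) (n : nat).
Local Open Scope ring_scope.
Implicit Types (f g : mon n -> F) (a b c m : mon n) (s : seq (mon n)) (x : 'rV[F]_n).

Definition supp_in f s : Prop := forall m, f m != 0 -> m \in s.

Lemma notin_supp f s m : supp_in f s -> m \notin s -> f m = 0.
Proof. by move=> sf ms; apply/eqP; apply: contraNT ms; apply: sf. Qed.

Lemma sum_over_support f (e : mon n -> F) s s' : uniq s -> uniq s' ->
  supp_in f s -> supp_in f s' ->
  \sum_(m <- s) f m * e m = \sum_(m <- s') f m * e m.
Proof.
move=> us us' sf sf'.
have drop0 t : \sum_(m <- t) f m * e m = \sum_(m <- [seq m <- t | f m != 0]) f m * e m.
  rewrite big_filter [RHS]big_mkcond /=; apply: eq_bigr => m _.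
  by case: eqP => // ->; rewrite mul0r.
rewrite drop0 [RHS]drop0; apply: perm_big; apply: uniq_perm; rewrite ?filter_uniq //.
by move=> m; rewrite !mem_filter; case: (boolP (f m != 0)) => //= /[dup] /sf -> /sf' ->.
Qed.

Lemma vanishes_sum f x s : vanishes_at f x -> uniq s -> supp_in f s ->
  \sum_(m <- s) f m * mon_eval m x = 0.
Proof.
case=> s0 [u0 [s0f sum0]] us sf.
by rewrite -[RHS]sum0; apply: sum_over_support.
Qed.

Lemma supp_in_sub f g s : supp_in f s -> supp_in g s -> supp_in (fun m => f m - g m) s.
Proof.
move=> sf sg m; apply: contraR => ms.
by rewrite (notin_supp sf ms) (notin_supp sg ms) subrr.
Qed.

Lemma vanishing_ideal_sub (S : 'rV[F]_n -> Prop) f g :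
  vanishing_ideal S f -> vanishing_ideal S g -> vanishing_ideal S (fun m => f m - g m).
Proof.
move=> [[s sf] vf] [[s' sg] vg]; set t := undup (s ++ s').
have sf_t : supp_in f t by move=> m /sf ms; rewrite mem_undup mem_cat ms.
have sg_t : supp_in g t by move=> m /sg ms; rewrite mem_undup mem_cat ms orbT.
have ut : uniq t := undup_uniq _.
split; first by exists t; apply: supp_in_sub.
move=> x Sx; exists t; split=> //; split; first exact: supp_in_sub.
under eq_bigr do rewrite mulrBl.
by rewrite sumrB (vanishes_sum (vf x Sx)) // (vanishes_sum (vg x Sx)) // subrr.
Qed.

Lemma mon_eval_xpow (i : 'I_n) d x : mon_eval (xpow i d) x = x ord0 i ^+ d.
Proof.
rewrite /mon_eval (bigD1 i) //= big1 ?mulr1 ?xpowE ?eqxx // => j /negbTE ji.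
by rewrite xpowE ji expr0.
Qed.

Lemma mon_eval1 x : mon_eval (mon1 n) x = 1.
Proof. by rewrite /mon_eval big1 // => j _; rewrite ffunE expr0. Qed.

Definition poly3 a b c (ca cb cc : F) m : F :=
  if m == a then ca else if m == b then cb else if m == c then cc else 0.

Section Poly3.
Variables (a b c : mon n) (ca cb cc : F).
Hypothesis abc : uniq [:: a; b; c].

Lemma poly3_supp : supp_in (poly3 a b c ca cb cc) [:: a; b; c].
Proof.
move=> m; rewrite /poly3 !inE.
by case: (m == a) => //; case: (m == b) => //; case: (m == c) => //; rewrite eqxx.
Qed.

Let abc_distinct : [&& a != b, a != c & b != c].
Proof. by move: abc; rewrite /= !inE !negb_or andbT => /andP[/andP[-> ->] ->]. Qed.

Lemma poly3_a : poly3 a b c ca cb cc a = ca.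
Proof. by rewrite /poly3 eqxx. Qed.
Lemma poly3_b : poly3 a b c ca cb cc b = cb.
Proof. by case/and3P: abc_distinct => ab _ _; rewrite /poly3 eq_sym (negbTE ab) eqxx. Qed.
Lemma poly3_c : poly3 a b c ca cb cc c = cc.
Proof.
case/and3P: abc_distinct => _ ac bc.
by rewrite /poly3 eq_sym (negbTE ac) eq_sym (negbTE bc) eqxx.
Qed.

Lemma poly3_in_ideal (S : 'rV[F]_n -> Prop) :
  (forall x, S x -> ca * mon_eval a x + cb * mon_eval b x + cc * mon_eval c x = 0) ->
  vanishing_ideal S (poly3 a b c ca cb cc).
Proof.
move=> vS; split; first by exists [:: a; b; c]; apply: poly3_supp.
move=> x Sx; exists [:: a; b; c]; split=> //; split; first exact: poly3_supp.
by rewrite !big_cons big_nil poly3_a poly3_b poly3_c addr0 addrA vS.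
Qed.
End Poly3.
End Evaluation.

Lemma In_mem (T : eqType) (x : T) (s : seq T) : List.In x s <-> x \in s.
Proof.
elim: s => //= y s IH; rewrite inE; split.
  by case=> [->|/IH ->]; rewrite ?eqxx ?orbT.
by case/orP=> [/eqP ->|/IH]; [left|right].
Qed.

Section PairIdeal.
Variables (F : fieldType) (n : nat) (P Q : 'rV[F]_n).
Local Open Scope ring_scope.
Local Notation I := (vanishing_ideal (pair_set P Q)).
Implicit Types (f g : mon n -> F) (a m : mon n) (i j k : 'I_n).

(* The line through P and Q, written as x_k = -alpha x_i - beta when
   P_i <> Q_i, gives the generator x_k + alpha x_i + beta. *)
Definition alpha i k : F := - (Q ord0 k - P ord0 k) / (Q ord0 i - P ord0 i).
Definition beta i k : F := - P ord0 k - alpha i k * P ord0 i.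
Definition lin_gen i k : mon n -> F :=
  poly3 (xpow k 1) (xpow i 1) (mon1 n) 1 (alpha i k) (beta i k).

(* (x_i - P_i) (x_i - Q_i) *)
Definition quad_gen i : mon n -> F :=
  poly3 (xpow i 2) (xpow i 1) (mon1 n) 1 (- (P ord0 i + Q ord0 i)) (P ord0 i * Q ord0 i).

Definition gb_cand i g : Prop := (exists2 k, k != i & g = lin_gen i k) \/ g = quad_gen i.

Definition least_diff_var (le : rel (mon n)) i : Prop :=
  forall j, P ord0 j != Q ord0 j -> le (xpow i 1) (xpow j 1).

Lemma uniq_lead_var_one a i : a \notin [:: xpow i 1; mon1 n] ->
  uniq [:: a; xpow i 1; mon1 n].
Proof. by move=> a_notin; rewrite cons_uniq a_notin /= inE xpow_neq1. Qed.

Lemma var_notin_low k i : k != i -> xpow k 1 \notin [:: xpow i 1; mon1 n].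
Proof. by move=> ki; rewrite !inE xpow_eq // (negbTE ki) xpow_neq1. Qed.

Lemma sq_notin_low i : xpow i 2 \notin [:: xpow i 1; mon1 n].
Proof. by rewrite !inE xpow_eq // andbF xpow_neq1. Qed.

Lemma quad_gen_in_ideal i : I (quad_gen i).
Proof.
apply: poly3_in_ideal; first exact: uniq_lead_var_one (sq_notin_low i).
move=> x Sx; rewrite !mon_eval_xpow mon_eval1.
by case: Sx => ->; ring.
Qed.

Lemma quad_gen_lead le i : monomial_order le -> lead_mon le (quad_gen i) (xpow i 2).
Proof.
have u := uniq_lead_var_one (sq_notin_low i).
move=> mo; split; first by rewrite /quad_gen poly3_a oner_neq0.
move=> m /poly3_supp; rewrite !inE => /or3P[] /eqP ->.
- exact: mo_refl.
- by apply: (mo_dvd mo); rewrite xpow_dvd xpowE eqxx.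
- exact: mo_ge1.
Qed.

(* The leading monomial of x_k + alpha x_i + beta is x_k as soon as x_i is
   below x_k whenever alpha <> 0, i.e. whenever P_k <> Q_k. *)
Lemma lin_gen_lead le i k : monomial_order le -> least_diff_var le i -> k != i ->
  lead_mon le (lin_gen i k) (xpow k 1).
Proof.
move=> mo least ki; have u := uniq_lead_var_one (var_notin_low ki).
split; first by rewrite /lin_gen poly3_a oner_neq0.
move=> m lm; move: (poly3_supp lm); rewrite !inE => /or3P[] /eqP em.
- by rewrite em mo_refl.
- rewrite em; apply: least; apply/eqP => Pk.
  by move: lm; rewrite em /lin_gen poly3_b // /alpha Pk subrr oppr0 mul0r eqxx.
- by rewrite em mo_ge1.
Qed.

Lemma gb_cand_finite i : exists l : list (mon n -> F), forall g, gb_cand i g <-> List.In g l.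
Proof.
exists (quad_gen i :: List.map (lin_gen i) [seq k <- enum 'I_n | k != i]) => g /=.
rewrite List.in_map_iff; split.
- case=> [[k ki ->]|->]; [right; exists k|by left].
  by split=> //; apply/In_mem; rewrite mem_filter ki mem_enum.
- case=> [<-|[k [<- /In_mem]]]; first by right.
  by rewrite mem_filter => /andP[ki _]; left; exists k.
Qed.

Variable i : 'I_n.
Hypothesis Di : P ord0 i != Q ord0 i.

Lemma lin_gen_in_ideal k : k != i -> I (lin_gen i k).
Proof.
move=> ki; apply: poly3_in_ideal; first exact: uniq_lead_var_one (var_notin_low ki).
have dnz : Q ord0 i - P ord0 i != 0 by rewrite subr_eq0 eq_sym.
have alpha_eq : alpha i k * (Q ord0 i - P ord0 i) = - (Q ord0 k - P ord0 k).
  by rewrite /alpha divfK.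
move=> x Sx; rewrite !mon_eval_xpow mon_eval1 !expr1 mulr1 /beta.
move: (alpha i k) alpha_eq => c alpha_eq.
case: Sx => ->; first by ring.
have -> : Q ord0 k = P ord0 k - c * (Q ord0 i - P ord0 i) by rewrite alpha_eq; ring.
ring.
Qed.

(* A polynomial of I involving only x_i and 1 is zero, since it is a
   linear function of x_i vanishing at the distinct values P_i, Q_i. *)
Lemma small_support_zero f : I f -> supp_in f [:: xpow i 1; mon1 n] -> forall m, f m = 0.
Proof.
move=> [_ vf] sf.
have u : uniq [:: xpow i 1; mon1 n] by rewrite /= inE xpow_neq1.
have := vanishes_sum (vf P (or_introl erefl)) u sf.
have := vanishes_sum (vf Q (or_intror erefl)) u sf.
rewrite !big_cons !big_nil !mon_eval_xpow !mon_eval1 !expr1 !addr0 !mulr1 => eQ eP.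
have fx0 : f (xpow i 1) = 0.
  have : f (xpow i 1) * (P ord0 i - Q ord0 i) = 0.
    by rewrite -[RHS](subrr 0) -{1}eP -eQ; ring.
  by move/eqP; rewrite mulf_eq0 subr_eq0 (negbTE Di) orbF => /eqP.
have f10 : f (mon1 n) = 0 by move: eP; rewrite fx0 mul0r add0r.
move=> m; case: (boolP (f m != 0)) => [/sf|/negPn /eqP //].
by rewrite !inE => /orP[] /eqP ->.
Qed.

(* Two polynomials of I supported on {a, x_i, 1} with the same coefficient
   at a coincide: their difference is supported on {x_i, 1}. *)
Lemma ideal_poly_unique a f f' : a \notin [:: xpow i 1; mon1 n] -> I f -> I f' ->
  supp_in f [:: a; xpow i 1; mon1 n] -> supp_in f' [:: a; xpow i 1; mon1 n] ->
  f a = f' a -> f = f'.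
Proof.
move=> a_notin If If' sf sf' fa.
apply: functional_extensionality => m; apply/eqP; rewrite -subr_eq0; apply/eqP.
apply: small_support_zero (vanishing_ideal_sub If If') _ m => m' dm'.
move: (supp_in_sub sf sf' dm'); rewrite inE => /orP[/eqP am'|//].
by rewrite am' fa subrr eqxx in dm'.
Qed.

Lemma lead_not_one le g m : monomial_order le -> I g -> lead_mon le g m -> m <> mon1 n.
Proof.
move=> mo Ig [gm m_max] m1; subst m.
move/eqP: gm; apply; apply: small_support_zero => // m' gm'.
by rewrite (mo_anti mo (m_max m' gm') (mo_ge1 mo m')) !inE eqxx orbT.
Qed.

Lemma gb_cand_members le : monomial_order le -> least_diff_var le i ->
  forall g, gb_cand i g -> I g /\ exists m, lead_mon le g m /\ g m = 1.
Proof.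
move=> mo least g [[k ki ->]|->].
  split; first exact: lin_gen_in_ideal.
  by exists (xpow k 1); split; [apply: lin_gen_lead | rewrite /lin_gen poly3_a].
split; first exact: quad_gen_in_ideal.
by exists (xpow i 2); split; [apply: quad_gen_lead | rewrite /quad_gen poly3_a].
Qed.

Lemma gb_cand_reduced le : monomial_order le -> least_diff_var le i ->
  forall g g', gb_cand i g -> gb_cand i g' -> g <> g' ->
  forall mg', lead_mon le g' mg' -> forall m, g m != 0 -> ~~ mdiv mg' m.
Proof.
move=> mo least g g' Gg Gg' gg' mg' lead' m gm.
case: Gg' gg' lead' => [[k' k'i ->]|->] gg' lead'.
  rewrite (lead_mon_unique mo lead' (lin_gen_lead mo least k'i)) xpow_dvd -eqn0Ngt.
  case: Gg gg' gm => [[k ki ->]|->] gg' /poly3_supp; rewrite !inE => /or3P[] /eqP ->;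
    rewrite ?xpowE ?ffunE ?(negbTE k'i) //.
  by case: (k' =P k) => // k'k; exfalso; apply: gg'; rewrite k'k.
rewrite (lead_mon_unique mo lead' (quad_gen_lead i mo)) xpow_dvd -ltnNge.
case: Gg gg' gm => [[k _ ->] _|-> //] /poly3_supp.
by rewrite !inE => /or3P[] /eqP ->; rewrite ?xpowE ?ffunE //; case: ifP.
Qed.

Lemma wlex_least_diff_var : least_diff_var (wlex i) i.
Proof.
move=> j _; case: (j =P i) => [->|/eqP ji]; first by apply: mo_refl; apply: wlex_mo.
by apply: wdeg_wlex; rewrite !wdeg_xpow /weight eqxx (negbTE ji).
Qed.

(* G_i is a Groebner basis for the weighted order: the leading monomial of a
   nonzero f in I has weighted degree >= 2, so it is divisible by some x_k,
   k <> i, or by x_i^2. *)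
Lemma gb_cand_groebner_wlex f : I f -> (exists m, f m != 0) ->
  exists g mg mf, [/\ gb_cand i g, lead_mon (wlex i) g mg, lead_mon (wlex i) f mf
                    & mdiv mg mf].
Proof.
move=> If nz; have mo := wlex_mo i.
have [mf lead_f] := lead_mon_exists mo If.1 nz.
case: (leqP (wdeg i mf) 1) => [deg_le1|deg_gt1].
  case: lead_f => fmf mf_max; move/eqP: fmf; have /small_support_zero -> // := If.
  by move=> m fm; apply: wdeg_le1 (leq_trans (wlex_wdeg (mf_max m fm)) deg_le1).
case: (boolP [exists k, (k != i) && (0 < mf k)%N]) => [/existsP[k /andP[ki mfk]]|].
  exists (lin_gen i k), (xpow k 1), mf; split=> //; first by left; exists k.
    exact: lin_gen_lead wlex_least_diff_var ki.
  by rewrite xpow_dvd.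
rewrite negb_exists => /forallP only_i.
have mf_on_i : mf = xpow i (mf i).
  by apply: mon_on_var => k ki; have := only_i k; rewrite ki /=; lia.
exists (quad_gen i), (xpow i 2), mf; split=> //; first by right.
  exact: quad_gen_lead.
by rewrite xpow_dvd; move: deg_gt1; rewrite mf_on_i wdeg_xpow xpowE !eqxx /weight eqxx muln1.
Qed.

Lemma gb_cand_rgb_wlex : reduced_groebner (wlex i) I (gb_cand i).
Proof.
split.
- exact: gb_cand_finite.
- exact: gb_cand_members (wlex_mo i) wlex_least_diff_var.
- exact: gb_cand_groebner_wlex.
- exact: gb_cand_reduced (wlex_mo i) wlex_least_diff_var.
Qed.

Section Classification.
Variables (le : rel (mon n)) (G : (mon n -> F) -> Prop).
Hypotheses (mo : monomial_order le) (rgb : reduced_groebner le I G).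
Hypothesis least : least_diff_var le i.

Lemma rgb_in_ideal g : G g -> I g.
Proof. by case: rgb => _ members _ _ /members[]. Qed.

Lemma rgb_monic g : G g -> exists m, lead_mon le g m /\ g m = 1.
Proof. by case: rgb => _ members _ _ /members[]. Qed.

Lemma rgb_not_dvd g g' mg mg' m : G g -> G g' -> lead_mon le g mg ->
  lead_mon le g' mg' -> mg != mg' -> g m != 0 -> ~~ mdiv mg' m.
Proof.
case: rgb => _ _ _ reduced Gg Gg' lead_g lead_g' mgg' gm.
apply: (reduced g g' Gg Gg' _ mg' lead_g' m gm) => gg'; subst g'.
by rewrite (lead_mon_unique mo lead_g lead_g') eqxx in mgg'.
Qed.

Lemma lead_dvd_eq g mg m : lead_mon le g mg -> g m != 0 -> mdiv mg m -> m = mg.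
Proof. by move=> [_ mg_max] gm dv; exact: (mo_anti mo (mg_max m gm) (mo_dvd mo dv)). Qed.

(* G contains an element with leading monomial x_k for each k <> i,
   because x_k is the leading monomial of x_k + alpha x_i + beta in I. *)
Lemma rgb_has_lin k : k != i -> exists2 g, G g & lead_mon le g (xpow k 1).
Proof.
move=> ki; case: rgb => _ _ groebner _.
have lin_nz : exists m, lin_gen i k m != 0.
  by exists (xpow k 1); rewrite /lin_gen poly3_a oner_neq0.
have [g [mg [mf [Gg lead_g lead_lin mg_dvd]]]] := groebner _ (lin_gen_in_ideal ki) lin_nz.
rewrite (lead_mon_unique mo lead_lin (lin_gen_lead mo least ki)) in mg_dvd.
have [mg_eq] := dvd_xpow mg_dvd; case: (mg k) mg_eq => [|[|]] // mg_eq _.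
  by case: (lead_not_one mo (rgb_in_ideal Gg) lead_g); rewrite mg_eq xpow0.
by exists g; rewrite -?mg_eq.
Qed.

(* No element of G has leading monomial x_i: its other monomials would avoid
   all x_k (k <> i) and be below x_i, so it would be supported on {x_i, 1}. *)
Lemma rgb_no_var g : G g -> ~ lead_mon le g (xpow i 1).
Proof.
move=> Gg lead_g; case: (lead_g) => g_xi _; move/eqP: g_xi; apply.
apply: small_support_zero; first exact: rgb_in_ideal.
move=> m gm; have m_on_i : m = xpow i (m i).
  apply: mon_on_var => k ki; have [g' Gg' lead_g'] := rgb_has_lin ki.
  have := rgb_not_dvd Gg Gg' lead_g lead_g' _ gm.
  by rewrite xpow_eq // eq_sym (negbTE ki) xpow_dvd -eqn0Ngt => /(_ isT) /eqP.
case: (posnP (m i)) => [mi0|mi_gt0].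
  by rewrite m_on_i mi0 xpow0 !inE eqxx orbT.
by rewrite (lead_dvd_eq lead_g gm) ?inE ?eqxx // xpow_dvd.
Qed.

(* G contains an element with leading monomial x_i^2, coming from
   (x_i - P_i)(x_i - Q_i). *)
Lemma rgb_has_quad : exists2 g, G g & lead_mon le g (xpow i 2).
Proof.
case: rgb => _ _ groebner _.
have quad_nz : exists m, quad_gen i m != 0.
  by exists (xpow i 2); rewrite /quad_gen poly3_a oner_neq0.
have [g [mg [mf [Gg lead_g lead_quad mg_dvd]]]] :=
  groebner _ (quad_gen_in_ideal i) quad_nz.
rewrite (lead_mon_unique mo lead_quad (quad_gen_lead i mo)) in mg_dvd.
have [mg_eq] := dvd_xpow mg_dvd; case: (mg i) mg_eq => [|[|[|]]] // mg_eq _.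
- by case: (lead_not_one mo (rgb_in_ideal Gg) lead_g); rewrite mg_eq xpow0.
- by case: (rgb_no_var Gg); rewrite -mg_eq.
- by exists g; rewrite -?mg_eq.
Qed.

Lemma rgb_lin_eq g k : k != i -> G g -> lead_mon le g (xpow k 1) -> g = lin_gen i k.
Proof.
move=> ki Gg lead_g; have [mg [lead_mg gmg]] := rgb_monic Gg.
rewrite (lead_mon_unique mo lead_mg lead_g) in gmg.
apply: (ideal_poly_unique (var_notin_low ki)) => //.
- exact: rgb_in_ideal.
- exact: lin_gen_in_ideal.
- move=> m gm; case: (posnP (m k)) => [mk0|mk_gt0]; last first.
    by rewrite (lead_dvd_eq lead_g gm) ?inE ?eqxx // xpow_dvd.
  have mi_le1 : (m i <= 1)%N.
    have [g' Gg' lead_g'] := rgb_has_quad.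
    have := rgb_not_dvd Gg Gg' lead_g lead_g' _ gm.
    by rewrite xpow_eq // andbF xpow_dvd -ltnNge => /(_ isT).
  have m_on_i : m = xpow i (m i).
    apply: mon_on_var => l li; case: (l =P k) => [->//|/eqP lk].
    have [g' Gg' lead_g'] := rgb_has_lin li.
    have := rgb_not_dvd Gg Gg' lead_g lead_g' _ gm.
    by rewrite xpow_eq // eq_sym (negbTE lk) xpow_dvd -eqn0Ngt => /(_ isT) /eqP.
  by rewrite m_on_i !inE; case: (m i) mi_le1 => [|[|]] // _; rewrite ?xpow0 eqxx ?orbT.
- exact: poly3_supp.
- by rewrite /lin_gen poly3_a.
Qed.

Lemma rgb_quad_eq g : G g -> lead_mon le g (xpow i 2) -> g = quad_gen i.
Proof.
move=> Gg lead_g; have [mg [lead_mg gmg]] := rgb_monic Gg.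
rewrite (lead_mon_unique mo lead_mg lead_g) in gmg.
apply: (ideal_poly_unique (sq_notin_low i)) => //.
- exact: rgb_in_ideal.
- exact: quad_gen_in_ideal.
- move=> m gm; have m_on_i : m = xpow i (m i).
    apply: mon_on_var => k ki; have [g' Gg' lead_g'] := rgb_has_lin ki.
    have := rgb_not_dvd Gg Gg' lead_g lead_g' _ gm.
    by rewrite xpow_eq // andbF xpow_dvd -eqn0Ngt => /(_ isT) /eqP.
  case: (leqP (m i) 1) => [mi_le1|mi_gt1].
    by rewrite m_on_i !inE; case: (m i) mi_le1 => [|[|]] // _; rewrite ?xpow0 eqxx ?orbT.
  by rewrite (lead_dvd_eq lead_g gm) ?inE ?eqxx // xpow_dvd.
- exact: poly3_supp.
- by rewrite /quad_gen poly3_a.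
Qed.

(* Every element of G is in G_i (its leading monomial is some x_k, k <> i,
   or x_i^2, and then the two lemmas above apply), and conversely. *)
Lemma rgb_classify : same_set G (gb_cand i).
Proof.
move=> g; split; last first.
  case=> [[k ki ->]|->].
    by have [g' Gg' lead_g'] := rgb_has_lin ki; rewrite -(rgb_lin_eq ki Gg' lead_g').
  by have [g' Gg' lead_g'] := rgb_has_quad; rewrite -(rgb_quad_eq Gg' lead_g').
move=> Gg; have [l [lead_l _]] := rgb_monic Gg.
have g_eq g' ml : G g' -> lead_mon le g' ml -> mdiv ml l -> g = g'.
  move=> Gg' lead' dv; apply: NNPP => gg'.
  by case: rgb => _ _ _ /(_ g g' Gg Gg' gg' ml lead' l lead_l.1); rewrite dv.
case: (boolP [exists k, (k != i) && (0 < l k)%N]) => [/existsP[k /andP[ki lk]]|].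
  have [g' Gg' lead_g'] := rgb_has_lin ki.
  left; exists k => //; rewrite (g_eq g' _ Gg' lead_g') ?xpow_dvd //.
  exact: rgb_lin_eq.
rewrite negb_exists => /forallP only_i.
have l_on_i : l = xpow i (l i).
  by apply: mon_on_var => k ki; have := only_i k; rewrite ki /=; lia.
case: (leqP (l i) 1) => [li_le1|li_gt1].
  move: lead_l; rewrite l_on_i; case: (l i) li_le1 => [|[|]] // _ lead_l.
    by case: (lead_not_one mo (rgb_in_ideal Gg) lead_l); rewrite xpow0.
  by case: (rgb_no_var Gg).
have [g' Gg' lead_g'] := rgb_has_quad.
right; rewrite (g_eq g' _ Gg' lead_g') ?xpow_dvd //.
exact: rgb_quad_eq.
Qed.
End Classification.
End PairIdeal.

Lemma length_size (T : Type) (s : seq T) : length s = size s.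
Proof. by elim: s => //= x s ->. Qed.

Lemma List_nth_nth (T : Type) (s : seq T) (d : T) k : List.nth k s d = nth d s k.
Proof. by elim: s k => [|x s IH] [|k] //=. Qed.

Section Count.
Variables (F : fieldType) (n : nat) (P Q : 'rV[F]_n).
Local Open Scope ring_scope.

Definition diff_coords : seq 'I_n := [seq j <- enum 'I_n | P ord0 j != Q ord0 j].

(* G_a and G_b differ for a <> b: (x_a - P_a)(x_a - Q_a) is not in G_b. *)
Lemma gb_cand_distinct a b : a != b -> ~ same_set (gb_cand P Q a) (gb_cand P Q b).
Proof.
move=> ab same; have : gb_cand P Q b (quad_gen P Q a) by apply/same; right.
have quad_a1 : quad_gen P Q a (xpow a 2) = 1 by rewrite /quad_gen poly3_a.
case=> [[k _ quad_eq]|quad_eq].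
  have : lin_gen P Q b k (xpow a 2) != 0 by rewrite -quad_eq quad_a1 oner_neq0.
  by move/poly3_supp; rewrite !inE !xpow_eq // !andbF (negbTE (xpow_neq1 _ _)).
have : quad_gen P Q b (xpow a 2) != 0 by rewrite -quad_eq quad_a1 oner_neq0.
by move/poly3_supp; rewrite !inE !xpow_eq // (negbTE ab) !andbF (negbTE (xpow_neq1 _ _)).
Qed.

Lemma exists_least_diff_var le : monomial_order le -> P <> Q ->
  exists2 i, i \in diff_coords & least_diff_var P Q le i.
Proof.
move=> mo PQ; have [j0 Dj0] : exists j, P ord0 j != Q ord0 j.
  apply: NNPP => all_eq; apply: PQ; apply/rowP => j.
  by case: (P ord0 j =P Q ord0 j) => // /eqP Dj; case: all_eq; exists j.
have : j0 \in diff_coords by rewrite mem_filter Dj0 mem_enum.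
case Ed: diff_coords => [//|x t] _.
have [i i_in i_min] := seq_max (r := fun a b => le (xpow b 1) (xpow a 1))
  (fun a b => mo_total mo _ _) (fun b a c ba cb => mo_trans mo cb ba) x t.
exists i => //.
by move=> j Dj; apply: i_min; rewrite -Ed mem_filter Dj mem_enum.
Qed.

Lemma num_rgb_pair : P <> Q ->
  num_reduced_groebner (vanishing_ideal (pair_set P Q)) (size diff_coords).
Proof.
move=> PQ; exists (List.map (gb_cand P Q) diff_coords); split.
- by rewrite List.length_map length_size.
- move=> G /List.in_map_iff [i [<- /In_mem]]; rewrite mem_filter => /andP[Di _].
  by exists (wlex i); split; [apply: wlex_mo | apply: gb_cand_rgb_wlex].
- move=> G [le [mo rgb]]; have [i i_in least] := exists_least_diff_var mo PQ.
  move: (i_in); rewrite mem_filter => /andP[Di _].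
  exists (gb_cand P Q i); split; last exact: rgb_classify rgb least.
  by apply/List.in_map_iff; exists i; split; last apply/In_mem.
- move=> a b; rewrite List.length_map length_size => /ltP a_lt /ltP b_lt ab d.
  case Ed: diff_coords a_lt b_lt => [//|x t] a_lt b_lt.
  rewrite !(List.nth_indep _ d (gb_cand P Q x)) ?List.length_map ?length_size; try exact/ltP.
  rewrite !List.map_nth !List_nth_nth; apply: gb_cand_distinct.
  have uniq_d : uniq (x :: t) by rewrite -Ed filter_uniq ?enum_uniq.
  by rewrite nth_uniq //; apply/eqP.
Qed.
End Count.

Theorem mainTheorem2 (p n : nat) (hp : prime p) (hn : (1 <= n)%N) :
  (forall P Q : 'rV['F_p]_n, P <> Q ->
     exists k, num_reduced_groebner (vanishing_ideal (pair_set P Q)) k /\ (k <= n)%N) /\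
  (exists P Q : 'rV['F_p]_n, P <> Q /\
     num_reduced_groebner (vanishing_ideal (pair_set P Q)) n).
Proof.
split.
  move=> P Q PQ; exists (size (diff_coords P Q)); split; first exact: num_rgb_pair.
  by rewrite size_filter (leq_trans (count_size _ _)) // size_enum_ord.
(* P = (0,...,0) and Q = (1,...,1) differ in every coordinate. *)
pose P : 'rV['F_p]_n := const_mx 0%R; pose Q : 'rV['F_p]_n := const_mx 1%R.
have PQ : P <> Q.
  by move/rowP/(_ (Ordinal hn)); rewrite !mxE => /eqP; rewrite eq_sym oner_eq0.
exists P, Q; split=> //.
have all_diff : diff_coords P Q = enum 'I_n.
  by apply/all_filterP/allP => j _; rewrite !mxE eq_sym oner_neq0.
by rewrite -[X in num_reduced_groebner _ X]size_enum_ord -all_diff; apply: num_rgb_pair.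
Qed.
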